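(* Let $f:\mathcal{S}\to\mathbb{R}$ be continuously differentiable with $f^{\inf}:=\inf_{X\in\mathcal{S}}f(X)>-\infty$, and suppose $f$ is layer-wise $(L^0,L^1)$-smooth with constants $L^0,L^1\in\mathbb{R}^p_+$. Fix $\varepsilon>0$ and let $X^0,X^1,\dots$ be the iterates of deterministic Gluon with radii $$t_i^k=\frac{\|\nabla_i f(X^k)\|_{(i)\star}}{L^0_i+L^1_i\|\nabla_i f(X^k)\|_{(i)\star}},$$ assumed well defined, i.e. $L^0_i+L^1_i\|\nabla_i f(X^k)\|_{(i)\star}>0$ whenever $\nabla_i f(X^k)\neq0$, and with $t_i^k:=0$ (so $X_i^{k+1}=X_i^k$) when $\nabla_i f(X^k)=0$. Let $\Delta^0:=f(X^0)-f^{\inf}$ and $L^1_{\max}:=\max_i L^1_i$. Then: (1) With $K:=\left\lceil \frac{2\Delta^0\sum_{i=1}^pL^0_i}{\varepsilon^2}+\frac{2\Delta^0L^1_{\max}}{\varepsilon}\right\rceil$ (provided $K\ge1$), $\min_{k=0,\dots,K-1}\sum_{i=1}^p\|\nabla_i f(X^k)\|_{(i)\star}\le\varepsilon$. (2) If moreover $L^1_i>0$ for all $i$, set $H:=\frac1p\sum_{j=1}^p\frac{1}{L^1_j}$ and $K:=\left\lceil \frac{2\Delta^0\sum_{i=1}^p \frac{L^0_i}{(L^1_i)^2}}{\varepsilon^2H^2}+\frac{2\Delta^0}{\varepsilon H}\right\rceil$; then (provided $K\ge1$) $\min_{k=0,\dots,K-1}\sum_{i=1}^p\frac{1/L^1_i}{H}\|\nabla_i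 f(X^k)\|_{(i)\star}\le\varepsilon$.
   Context: $\mathcal{S}=\mathcal{S}_1\times\cdots\times\mathcal{S}_p$ with $\mathcal{S}_i=\mathbb{R}^{m_i\times n_i}$; an element is written $X=[X_1,\dots,X_p]$. Each $\mathcal{S}_i$ carries the trace inner product $\langle X_i,Y_i\rangle_{(i)}=\operatorname{tr}(X_i^\top Y_i)$ and an arbitrary norm $\|\cdot\|_{(i)}$ with dual norm $\|Y_i\|_{(i)\star}=\sup_{\|Z_i\|_{(i)}\le 1}\langle Y_i,Z_i\rangle_{(i)}$. $\nabla_i f(X)\in\mathcal{S}_i$ denotes the block of the gradient of $f$ corresponding to $X_i$. Layer-wise $(L^0,L^1)$-smoothness: for all $i$ and all $X,Y\in\mathcal{S}$, $\|\nabla_i f(X)-\nabla_i f(Y)\|_{(i)\star}\le (L^0_i+L^1_i\|\nabla_i f(X)\|_{(i)\star})\|X_i-Y_i\|_{(i)}$. Deterministic Gluon: for $k=0,1,\dots$ and each $i$, given radius $t_i^k\ge0$, set $X_i^{k+1}\in\arg\min\{\langle \nabla_i f(X^k),X_i\rangle_{(i)}: \|X_i-X_i^k\|_{(i)}\le t_i^k\}$ (any minimizer) and $X^{k+1}=[X_1^{k+1},\dots,X_p^{k+1}]$. *)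

From HB Require Import structures.
From mathcomp Require Import all_boot all_order all_algebra.
From mathcomp Require Import classical_sets boolp reals.
Set Implicit Arguments. Unset Strict Implicit. Unset Printing Implicit Defensive.
Import Order.TTheory GRing.Theory Num.Theory.
Local Open Scope ring_scope.
Local Open Scope classical_set_scope.

Definition pspace (R : realType) (p : nat) (m n : 'I_p -> nat) :=
  forall i : 'I_p, 'M[R]_(m i, n i).

Definition ip (R : realType) (a b : nat) (A B : 'M[R]_(a, b)) : R :=
  \tr (A^T *m B).

Definition is_norm (R : realType) (a b : nat) (N : 'M[R]_(a, b) -> R) : Prop :=
  [/\ (forall A, 0 <= N A),
      (forall A, N A = 0 -> A = 0),
      (forall (c : R) A, N (c *: A) = `|c| * N A) &
      (forall A B, N (A + B) <= N A + N B)].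

Definition dual_norm (R : realType) (a b : nat) (N : 'M[R]_(a, b) -> R)
  (Y : 'M[R]_(a, b)) : R :=
  sup [set ip Y Z | Z in [set Z | N Z <= 1]].

(* A fixed reference norm on S (entrywise l1); all norms on the
   finite-dimensional space S are equivalent, so differentiability and
   continuity do not depend on this choice. *)
Definition snorm (R : realType) p (m n : 'I_p -> nat) (X : pspace R m n) : R :=
  \sum_(i < p) \sum_(a < m i) \sum_(b < n i) `|X i a b|.

Definition sadd (R : realType) p (m n : 'I_p -> nat) (X Y : pspace R m n)
  : pspace R m n := fun i => X i + Y i.

Definition ssub (R : realType) p (m n : 'I_p -> nat) (X Y : pspace R m n)
  : pspace R m n := fun i => X i - Y i.

Definition sip (R : realType) p (m n : 'I_p -> nat) (X Y : pspace R m n) : R :=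
  \sum_(i < p) ip (X i) (Y i).

Definition is_gradient (R : realType) p (m n : 'I_p -> nat)
  (f : pspace R m n -> R) (G : pspace R m n -> pspace R m n) : Prop :=
  forall X : pspace R m n, forall eps : R, 0 < eps ->
    exists2 delta : R, 0 < delta &
      forall H : pspace R m n, snorm H < delta ->
        `|f (sadd X H) - f X - sip (G X) H| <= eps * snorm H.

Definition scontinuous (R : realType) p (m n : 'I_p -> nat)
  (G : pspace R m n -> pspace R m n) : Prop :=
  forall X : pspace R m n, forall eps : R, 0 < eps ->
    exists2 delta : R, 0 < delta &
      forall Y : pspace R m n, snorm (ssub Y X) < delta ->
        snorm (ssub (G Y) (G X)) < eps.

Definition C1_with_gradient (R : realType) p (m n : 'I_p -> nat)
  (f : pspace R m n -> R) (G : pspace R m n -> pspace R m n) : Prop :=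
  is_gradient f G /\ scontinuous G.

Definition layerwise_L0L1_smooth (R : realType) p (m n : 'I_p -> nat)
  (N : forall i : 'I_p, 'M[R]_(m i, n i) -> R)
  (G : pspace R m n -> pspace R m n) (L0 L1 : 'I_p -> R) : Prop :=
  forall (i : 'I_p) (X Y : pspace R m n),
    dual_norm (N i) (G X i - G Y i)
      <= (L0 i + L1 i * dual_norm (N i) (G X i)) * N i (X i - Y i).

Definition gluon_radius (R : realType) (a b : nat) (N : 'M[R]_(a, b) -> R)
  (l0 l1 : R) (g : 'M[R]_(a, b)) : R :=
  if g == 0 then 0
  else dual_norm N g / (l0 + l1 * dual_norm N g).

Definition gluon_iterates (R : realType) p (m n : 'I_p -> nat)
  (N : forall i : 'I_p, 'M[R]_(m i, n i) -> R)
  (G : pspace R m n -> pspace R m n) (t : nat -> 'I_p -> R)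
  (X : nat -> pspace R m n) : Prop :=
  forall (k : nat) (i : 'I_p),
    N i (X k.+1 i - X k i) <= t k i /\
    forall Z : 'M[R]_(m i, n i), N i (Z - X k i) <= t k i ->
      ip (G (X k) i) (X k.+1 i) <= ip (G (X k) i) Z.

From HB Require Import structures.
From mathcomp Require Import all_boot all_order all_algebra.
From mathcomp Require Import classical_sets boolp reals.
From mathcomp Require Import functions topology normedtype derive.
From mathcomp Require Import ring lra.
Set Implicit Arguments. Unset Strict Implicit. Unset Printing Implicit Defensive.
Import Order.TTheory GRing.Theory Num.Theory.
Import numFieldNormedType.Exports.
Local Open Scope ring_scope.
Local Open Scope classical_set_scope.

(* Along the segment from X to Y, the mean value theorem and layer-wise
   (L0,L1)-smoothness give the descent inequality
     f Y <= f X + <grad f X, Y - X> + sum_i c_i / 2 * ||Y_i - X_i||^2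
   with c_i = L0_i + L1_i ||grad_i f X||_*.  A Gluon block step of radius
   ||grad_i f||_* / c_i minimizes the i-th term of this model, so f decreases
   by at least (1/2) sum_i ||grad_i f||_*^2 / c_i.  Cauchy-Schwarz bounds this
   below by U^2 / (2 (A + B U)), where U is the (weighted) sum of the dual
   norms and A, B are the constants of part (1) resp. (2).  The decreases add
   up to at most Delta0 and u |-> u^2 / (A + B u) is increasing, so U > eps
   cannot hold at all of the first K iterates. *)

Lemma mx_entry_le_norm (R : realType) (a b : nat) (A : 'M[R]_(a, b)) i j :
  `|A i j| <= `|A|.
Proof.
change (`|A i j| <= mx_norm A); rewrite mx_normrE.
by apply/bigmax_geP; right; exists (i, j).
Qed.

Section Norms.
Variables (R : realType) (a b : nat) (N : 'M[R]_(a, b) -> R).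
Hypothesis Nn : is_norm N.

Lemma norm_ge0 A : 0 <= N A.
Proof. by case: Nn => + _ _ _; apply. Qed.

Lemma norm_eq0 A : N A = 0 -> A = 0.
Proof. by case: Nn => _ + _ _; apply. Qed.

Lemma normZ c A : N (c *: A) = `|c| * N A.
Proof. by case: Nn => _ _ + _; apply. Qed.

Lemma norm_triangle A B : N (A + B) <= N A + N B.
Proof. by case: Nn => _ _ _; apply. Qed.

Lemma norm0 : N 0 = 0.
Proof. by rewrite -(scale0r 0) normZ normr0 mul0r. Qed.

Lemma normN A : N (- A) = N A.
Proof. by rewrite -scaleN1r normZ normrN normr1 mul1r. Qed.

Lemma norm_dist_le A B : `|N A - N B| <= N (A - B).
Proof.
have NA : N A <= N (A - B) + N B by rewrite -{1}(subrK B A) norm_triangle.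
have NB : N B <= N (B - A) + N A by rewrite -{1}(subrK A B) norm_triangle.
have NBA : N (B - A) = N (A - B) by rewrite -normN opprB.
by rewrite ler_norml; apply/andP; split; lra.
Qed.

Lemma norm_sum_le (I : finType) (F : I -> 'M[R]_(a, b)) :
  N (\sum_i F i) <= \sum_i N (F i).
Proof.
elim/big_rec2: _ => [|i y1 y2 _ IH]; first by rewrite norm0.
by apply: le_trans (norm_triangle _ _) _; rewrite lerD2l.
Qed.

Lemma norm_le_mx_norm : exists2 M, 0 <= M & forall A, N A <= M * `|A|.
Proof.
exists (\sum_i \sum_j N (delta_mx i j)).
  by do 2!apply: sumr_ge0 => ? _; exact: norm_ge0.
move=> A; rewrite {1}(matrix_sum_delta A) mulr_suml.
apply: le_trans (norm_sum_le _) _; apply: ler_sum => i _; rewrite mulr_suml.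
apply: le_trans (norm_sum_le _) _; apply: ler_sum => j _.
by rewrite normZ mulrC ler_wpM2l ?norm_ge0 ?mx_entry_le_norm.
Qed.

Lemma is_norm_continuous : continuous N.
Proof.
have [M M0 NM] := norm_le_mx_norm.
move=> x; apply/(@cvgrPdist_le _ _ _ (nbhs x) (nbhs_filter x)) => e e0.
apply: (proj2 (@nbhs_normP R _ x _)); exists (e / (M + 1)) => /=.
  by rewrite divr_gt0 // ltr_wpDl.
move=> y; rewrite /ball_ /= => xy; apply: le_trans (norm_dist_le _ _) _.
apply: le_trans (NM _) _.
have : `|x - y| * (M + 1) <= e by rewrite -ler_pdivlMr ?ltr_wpDl // ltW.
by have := normr_ge0 (x - y); nra.
Qed.

End Norms.

(* [dual_norm] is a [sup], which is only meaningful on a bounded set: the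
   unit ball of [N] must be bounded in the entries. This is the equivalence
   of norms in finite dimension, obtained by minimizing [N] over the
   (compact) unit sphere of the max norm. *)
Lemma rV_norm_lb (R : realType) (k : nat) (N : 'rV[R]_k -> R) : is_norm N ->
  exists2 c, 0 < c & forall v, c * `|v| <= N v.
Proof.
move=> Nn; pose S := [set v : 'rV[R]_k | `|v| = 1].
have [[v0 Sv0]|S0] := pselect (S !=set0); last first.
  exists 1 => // v; rewrite mul1r.
  have [->|vn0] := eqVneq v 0; first by rewrite normr0 (norm0 Nn).
  by exfalso; apply: S0; exists (`|v|^-1 *: v); exact: normfZV.
have cS : compact S.
  apply: bounded_closed_compact.
    by exists 1; split => // M M1 x /= ->; exact: ltW.
  have -> : S = (Num.norm : 'rV[R]_k -> R) @^-1` [set x | x = 1] by [].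
  apply: preimage_closed; last exact: closed_eq.
  by move=> x _; apply: norm_continuous.
have [c Sc cmin] := compact_EVT_min (ex_intro _ v0 Sv0) cS
  (continuous_subspaceT (is_norm_continuous Nn)).
have cn0 : c != 0.
  apply/eqP => c0; move: Sc; rewrite inE /S /= c0 normr0 => /esym/eqP.
  by rewrite oner_eq0.
exists (N c).
  rewrite lt_def (norm_ge0 Nn) andbT.
  by apply: contra cn0 => /eqP /(norm_eq0 Nn) ->.
move=> v; have [->|vn0] := eqVneq v 0; first by rewrite normr0 mulr0 (norm0 Nn).
have := cmin (`|v|^-1 *: v); rewrite inE /S /= normfZV // => /(_ erefl).
by rewrite (normZ Nn) normfV normr_id ler_pdivlMl ?normr_gt0 // mulrC.
Qed.

Lemma norm_entry_lb (R : realType) (a b : nat) (N : 'M[R]_(a, b) -> R) :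
  is_norm N -> exists2 c, 0 < c & forall (A : 'M_(a, b)) i j, c * `|A i j| <= N A.
Proof.
move=> Nn.
have Nvec_norm : is_norm (N \o @vec_mx R a b).
  split=> [v|v|c v|v w] /=; rewrite ?linearZ ?linearD.
  - exact: (norm_ge0 Nn).
  - by move/(norm_eq0 Nn)/eqP; rewrite vec_mx_eq0 => /eqP.
  - exact: (normZ Nn).
  - exact: (norm_triangle Nn).
have [c c0 Hc] := rV_norm_lb Nvec_norm.
exists c => // A i j; have := Hc (mxvec A); rewrite /= mxvecK; apply: le_trans.
by rewrite -mxvecE ler_wpM2l ?(ltW c0) ?mx_entry_le_norm.
Qed.

Section InnerProduct.
Variables (R : realType) (a b : nat).
Implicit Types Y Z : 'M[R]_(a, b).

Lemma ipE Y Z : ip Y Z = \sum_i \sum_j Y i j * Z i j.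
Proof.
rewrite /ip /mxtrace exchange_big /=; apply: eq_bigr => j _.
by rewrite !mxE; apply: eq_bigr => i _; rewrite mxE.
Qed.

Lemma ip0l Z : ip 0 Z = 0.
Proof. by rewrite /ip trmx0 mul0mx mxtrace0. Qed.

Lemma ip0r Y : ip Y 0 = 0.
Proof. by rewrite /ip mulmx0 mxtrace0. Qed.

Lemma ipZr Y Z c : ip Y (c *: Z) = c * ip Y Z.
Proof. by rewrite /ip -scalemxAr mxtraceZ. Qed.

Lemma ipBl Y1 Y2 Z : ip (Y1 - Y2) Z = ip Y1 Z - ip Y2 Z.
Proof. by rewrite /ip linearB mulmxBl linearB. Qed.

Lemma ipBr Y Z1 Z2 : ip Y (Z1 - Z2) = ip Y Z1 - ip Y Z2.
Proof. by rewrite /ip mulmxBr linearB. Qed.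

Lemma ipNN Y Z : ip (- Y) (- Z) = ip Y Z.
Proof.
by rewrite !ipE; apply: eq_bigr => i _; apply: eq_bigr => j _; rewrite !mxE mulrNN.
Qed.

End InnerProduct.

Section DualNorm.
Variables (R : realType) (a b : nat) (N : 'M[R]_(a, b) -> R).
Hypothesis Nn : is_norm N.

Let unit_ball_ip_neq0 Y : [set ip Y Z | Z in [set Z | N Z <= 1]] !=set0.
Proof. by exists 0, 0; rewrite /= ?ip0r ?(norm0 Nn). Qed.

Lemma dual_norm_has_sup Y : has_sup [set ip Y Z | Z in [set Z | N Z <= 1]].
Proof.
split; first exact: unit_ball_ip_neq0.
have [c c0 Nlb] := norm_entry_lb Nn.
exists ((\sum_i \sum_j `|Y i j|) / c) => _ [Z /= NZ1 <-].
rewrite ipE mulr_suml; apply: ler_sum => i _; rewrite mulr_suml.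
apply: ler_sum => j _; apply: le_trans (ler_norm _) _.
rewrite normrM ler_wpM2l // -(mul1r c^-1) ler_pdivlMr // mulrC.
exact: le_trans (Nlb Z i j) NZ1.
Qed.

Lemma ip_le_dual_norm Y Z : ip Y Z <= dual_norm N Y * N Z.
Proof.
have [/(norm_eq0 Nn) ->|NZ0] := eqVneq (N Z) 0; first by rewrite ip0r (norm0 Nn) mulr0.
have NZ_gt0 : 0 < N Z by rewrite lt_def NZ0 (norm_ge0 Nn).
rewrite -ler_pdivrMr // mulrC -ipZr.
apply: sup_upper_bound; first exact: dual_norm_has_sup.
exists ((N Z)^-1 *: Z) => //=.
by rewrite (normZ Nn) normfV ger0_norm ?(norm_ge0 Nn) // mulVf.
Qed.

Lemma dual_norm_ge0 Y : 0 <= dual_norm N Y.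
Proof.
apply: le_trans (sup_upper_bound (dual_norm_has_sup Y) _); first exact: lexx.
by exists 0; rewrite /= ?ip0r ?(norm0 Nn).
Qed.

Lemma dual_norm_le Y u :
  (forall Z, N Z <= 1 -> ip Y Z <= u) -> dual_norm N Y <= u.
Proof. by move=> Yu; apply: ge_sup => // _ [Z NZ1 <-]; exact: Yu. Qed.

Lemma dual_norm0 : dual_norm N 0 = 0.
Proof.
by apply/le_anti; rewrite dual_norm_ge0 andbT dual_norm_le // => Z _; rewrite ip0l.
Qed.

Lemma lmo_ip_le (g x y : 'M[R]_(a, b)) (t : R) : 0 <= t ->
  (forall Z, N (Z - x) <= t -> ip g y <= ip g Z) ->
  ip g (y - x) <= - (t * dual_norm N g).
Proof.
move=> t_ge0 ymin; rewrite ipBr.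
have [->|tn0] := eqVneq t 0.
  by rewrite mul0r oppr0 subr_le0 ymin // subrr (norm0 Nn).
have t_gt0 : 0 < t by rewrite lt_def tn0.
suff : dual_norm N g <= (ip g x - ip g y) / t by rewrite ler_pdivlMr // mulrC; lra.
apply: dual_norm_le => Z NZ1; rewrite ler_pdivlMr // mulrC.
have := ymin (x - t *: Z).
rewrite addrAC subrr add0r (normN Nn) (normZ Nn) (ger0_norm t_ge0) ipBr ipZr.
by move/(_ (ler_piMr (ltW t_gt0) NZ1)); lra.
Qed.

Lemma gluon_radiusE l0 l1 g :
  gluon_radius N l0 l1 g = dual_norm N g / (l0 + l1 * dual_norm N g).
Proof. by rewrite /gluon_radius; case: eqP => // ->; rewrite dual_norm0 mul0r. Qed.

(* The radius [t = d / c] minimizes [- t d + c / 2 * t ^+ 2], the model value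
   of a step of length [t] in the steepest direction; the closing identity
   also holds for the junk value [c = 0], where [d / 0 = 0]. *)
Lemma gluon_block_decrease l0 l1 (g x y : 'M[R]_(a, b)) :
  0 <= l0 -> 0 <= l1 ->
  N (y - x) <= gluon_radius N l0 l1 g ->
  (forall Z, N (Z - x) <= gluon_radius N l0 l1 g -> ip g y <= ip g Z) ->
  ip g (y - x) + (l0 + l1 * dual_norm N g) / 2 * N (y - x) ^+ 2
    <= - (dual_norm N g ^+ 2 / (2 * (l0 + l1 * dual_norm N g))).
Proof.
rewrite gluon_radiusE => l0_ge0 l1_ge0.
have d_ge0 := dual_norm_ge0 g.
set d := dual_norm N g in d_ge0 *; set c := l0 + l1 * d => yx ymin.
have c_ge0 : 0 <= c by rewrite addr_ge0 // mulr_ge0.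
have t_ge0 : 0 <= d / c by rewrite divr_ge0.
have ip_le : ip g (y - x) <= - (d / c * d) := lmo_ip_le t_ge0 ymin.
have : c / 2 * N (y - x) ^+ 2 <= c / 2 * (d / c) ^+ 2.
  by rewrite ler_wpM2l ?divr_ge0 // ler_sqr ?nnegrE ?(norm_ge0 Nn).
have -> : - (d ^+ 2 / (2 * c)) = - (d / c * d) + c / 2 * (d / c) ^+ 2.
  have [->|cn0] := eqVneq c 0; last by field.
  by rewrite !(mulr0, invr0, mul0r, oppr0, addr0).
lra.
Qed.

End DualNorm.

Section Descent.
Variables (R : realType) (p : nat) (m n : 'I_p -> nat).
Variables (N : forall i : 'I_p, 'M[R]_(m i, n i) -> R)
  (f : pspace R m n -> R) (G : pspace R m n -> pspace R m n)
  (L0 L1 : 'I_p -> R).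
Arguments N : clear implicits.
Hypotheses (Nn : forall i : 'I_p, is_norm (N i)) (fG : is_gradient f G)
  (smooth : layerwise_L0L1_smooth N G L0 L1).

Definition sline (X D : pspace R m n) (t : R) : pspace R m n :=
  fun i => X i + t *: D i.

Lemma snorm_ge0 (D : pspace R m n) : 0 <= snorm D.
Proof. by do 3!apply: sumr_ge0 => ? _. Qed.

Lemma snormZ (D : pspace R m n) h : snorm (fun i => h *: D i) = `|h| * snorm D.
Proof.
rewrite /snorm mulr_sumr; apply: eq_bigr => i _; rewrite mulr_sumr.
apply: eq_bigr => a _; rewrite mulr_sumr; apply: eq_bigr => b _.
by rewrite mxE normrM.
Qed.

Lemma sipZr (A D : pspace R m n) h : sip A (fun i => h *: D i) = h * sip A D.
Proof. by rewrite /sip mulr_sumr; apply: eq_bigr => i _; rewrite ipZr. Qed.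

Lemma sadd_sline (X D : pspace R m n) (t h : R) :
  sadd (sline X D t) (fun i => h *: D i) = sline X D (h + t).
Proof.
apply: functional_extensionality_dep => i.
by rewrite /sadd /sline scalerDl [h *: D i + _]addrC addrA.
Qed.

Lemma is_derive_sline (X D : pspace R m n) (t : R) :
  is_derive t (1 : R) (fun s => f (sline X D s)) (sip (G (sline X D t)) D).
Proof.
set F := fun s => f (sline X D s); set s := sip _ D.
have sD_gt0 : 0 < snorm D + 1 by rewrite ltr_wpDl ?snorm_ge0.
suff dq : (fun h => h^-1 *: ((F \o shift t) (h *: (1 : R)) - F t)) @ 0^' --> s.
  by split; [apply/cvg_ex; exists s | exact: cvg_lim].
apply/cvgrPdist_le => e e0.
have [d d0 Hd] := fG (sline X D t) (divr_gt0 e0 sD_gt0).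
rewrite near_withinE; apply/nbhs_normP; exists (d / (snorm D + 1)) => /=.
  exact: divr_gt0.
move=> h; rewrite /ball_ /= sub0r normrN => hd hn0.
have hD : snorm (fun i => h *: D i) < d.
  rewrite snormZ; apply: le_lt_trans (_ : `|h| * (snorm D + 1) < d).
    by rewrite ler_wpM2l // lerDl.
  by rewrite -ltr_pdivlMr.
have := Hd _ hD; rewrite sadd_sline sipZr snormZ /F /= /shift /= [h%:A]mulr1.
set Df := f _ - f _ => Dfh.
have -> : s - h^-1 *: Df = - (h^-1 * (Df - h * s)).
  by rewrite mulrBr mulrA mulVf // mul1r opprB.
rewrite normrN normrM normfV ler_pdivrMl ?normr_gt0 //.
apply: le_trans Dfh _.
have e_split : e = e / (snorm D + 1) * (snorm D + 1) by rewrite divfK // gt_eqF.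
rewrite [X in _ <= _ * X]e_split.
have := normr_ge0 h; have := snorm_ge0 D.
have : 0 <= e / (snorm D + 1) by rewrite divr_ge0 // ltW.
nra.
Qed.

Lemma sip_grad_sline_sub_le (X D : pspace R m n) s : 0 <= s ->
  sip (G (sline X D s)) D - sip (G X) D
    <= s * \sum_i (L0 i + L1 i * dual_norm (N i) (G X i)) * N i (D i) ^+ 2.
Proof.
move=> s_ge0; rewrite /sip -sumrB mulr_sumr; apply: ler_sum => i _.
rewrite -ipBl -ipNN opprB; apply: le_trans (ip_le_dual_norm (Nn i) _ _) _.
have := smooth i X (sline X D s).
rewrite /sline opprD addrA subrr add0r !(normN (Nn i)) (normZ (Nn i)) ger0_norm // => sm.
apply: le_trans (ler_wpM2r (norm_ge0 (Nn i) (D i)) sm) _.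
by rewrite expr2 !mulrA [s * _]mulrC.
Qed.

Lemma descent_lemma (X Y : pspace R m n) :
  f Y <= f X + sip (G X) (ssub Y X) +
    \sum_i (L0 i + L1 i * dual_norm (N i) (G X i)) / 2 * N i (Y i - X i) ^+ 2.
Proof.
set D := ssub Y X.
set C := \sum_i (L0 i + L1 i * dual_norm (N i) (G X i)) * N i (D i) ^+ 2.
set s0 := sip (G X) D.
pose q : {poly R} := s0 *: 'X + (C / 2) *: 'X^2.
pose phi := (fun s => f (sline X D s)) - horner q.
have dphi x : is_derive x (1 : R) phi (sip (G (sline X D x)) D - (deriv q).[x]).
  by apply: is_deriveB; exact: is_derive_sline.
have cphi : {within `[0, 1], continuous phi}.
  by apply: derivable_within_continuous => y _; case: (dphi y).
have [c c01 mvt] := MVT_segment ler01 (fun x _ => dphi x) cphi.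
have c_ge0 : 0 <= c by move: c01; rewrite in_itv /= => /andP[].
have slope := sip_grad_sline_sub_le X D c_ge0; rewrite -/s0 -/C in slope.
have sline1 : sline X D 1 = Y.
  by apply: functional_extensionality_dep => i; rewrite /sline scale1r addrC subrK.
have sline0 : sline X D 0 = X.
  by apply: functional_extensionality_dep => i; rewrite /sline scale0r addr0.
have -> : \sum_i (L0 i + L1 i * dual_norm (N i) (G X i)) / 2 * N i (Y i - X i) ^+ 2
    = C / 2.
  by rewrite /C mulr_suml; apply: eq_bigr => i _; rewrite mulrAC.
have : f (sline X D 1) - q.[1] - (f (sline X D 0) - q.[0])
    = (sip (G (sline X D c)) D - (deriv q).[c]) * (1 - 0) := mvt.
rewrite sline1 sline0 /q !poly.derivE !hornerE /=.
lra.
Qed.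

End Descent.

Section RealInequalities.
Variable R : realType.

(* [u ^+ 2 / (A + B * u)] is increasing in [u > 0]. *)
Lemma sqr_le_affine_lt (A B T e u : R) : 0 < e -> 0 <= A -> 0 <= B -> e < u ->
  u ^+ 2 <= 2 * T * (A + B * u) -> e ^+ 2 < 2 * T * (A + B * e).
Proof.
move=> e_gt0 A_ge0 B_ge0 eu uT.
have u_gt0 : 0 < u := lt_trans e_gt0 eu.
have Su_ge0 : 0 <= A + B * u by rewrite addr_ge0 // mulr_ge0 // ltW.
have Se_ge0 : 0 <= A + B * e by rewrite addr_ge0 // mulr_ge0 // ltW.
have Su_gt0 : 0 < A + B * u.
  rewrite lt_def Su_ge0 andbT; apply: contraTneq uT => ->.
  by rewrite mulr0 -ltNge exprn_gt0.
rewrite -(ltr_pM2r Su_gt0).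
have : 0 < (u - e) * e * (A + B * u) by rewrite !mulr_gt0 // subr_gt0.
have : 0 <= A * u * (u - e) by rewrite !mulr_ge0 // ?subr_ge0 ltW.
have := ler_wpM2r Se_ge0 uT.
nra.
Qed.

Lemma exists_le_before_ceil (A B D e : R) (U T : nat -> R) :
  0 < e -> 0 <= A -> 0 <= B ->
  (forall k, U k ^+ 2 <= 2 * T k * (A + B * U k)) ->
  (forall k, \sum_(j < k) T j <= D) ->
  (1 <= Num.ceil (2 * D * A / e ^+ 2 + 2 * D * B / e))%R ->
  exists2 k : nat,
    (k%:Z < Num.ceil (2 * D * A / e ^+ 2 + 2 * D * B / e))%R & U k <= e.
Proof.
move=> e_gt0 A_ge0 B_ge0 UT TD; set x := _ + _ => K_ge1.
have [K EK] : exists K : nat, Num.ceil x = K.+1%:Z.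
  by case: (Num.ceil x) K_ge1 => [[|K]|K] //; exists K.
rewrite EK.
have [//|small] := pselect (exists2 k : nat, (k%:Z < K.+1%:Z)%R & U k <= e).
exfalso.
have big k : (k < K.+1)%N -> e ^+ 2 < 2 * T k * (A + B * e).
  move=> kK; apply: sqr_le_affine_lt (UT k) => //.
  by rewrite ltNge; apply/negP => Uke; apply: small; exists k; rewrite ?ltz_nat.
have Se_ge0 : 0 <= A + B * e by rewrite addr_ge0 // mulr_ge0 // ltW.
have : \sum_(j < K.+1) e ^+ 2 < \sum_(j < K.+1) 2 * T j * (A + B * e).
  apply: ltr_sum => [|j _]; last exact: big.
  by apply/hasP; exists ord0; rewrite ?mem_index_enum.
rewrite sumr_const card_ord -mulr_natl -mulr_suml -mulr_sumr.
have := ler_wpM2r Se_ge0 (TD K.+1).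
have x_eq : x = 2 * D * (A + B * e) / e ^+ 2.
  by rewrite /x; field; exact: lt0r_neq0.
have : x <= K.+1%:R by have := ceil_ge x; rewrite EK.
rewrite x_eq ler_pdivrMr ?exprn_gt0 //.
lra.
Qed.

Lemma cauchy_schwarz_engel (I : finType) (u g : I -> R) :
  (forall i, 0 <= g i) -> (forall i, g i = 0 -> u i = 0) ->
  (\sum_i u i) ^+ 2 <= (\sum_i u i ^+ 2 / g i) * (\sum_i g i).
Proof.
move=> g_ge0 gu.
have [C0|Cn0] := eqVneq (\sum_i g i) 0.
  rewrite big1 ?expr0n ?C0 ?mulr0 // => i _; apply: gu.
  by move/eqP: C0; rewrite psumr_eq0 => [/allP/(_ i (mem_index_enum _))/eqP|j _].
have C_gt0 : 0 < \sum_i g i by rewrite lt_def Cn0 sumr_ge0.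
set U := \sum_i u i; set C := \sum_i g i; set l := U / C.
have term i : 2 * l * u i - l ^+ 2 * g i <= u i ^+ 2 / g i.
  have [gi0|gin0] := eqVneq (g i) 0.
    by rewrite gi0 (gu i gi0) !mulr0 expr0n /= mul0r subr0.
  rewrite -subr_ge0.
  have -> : u i ^+ 2 / g i - (2 * l * u i - l ^+ 2 * g i)
      = (u i - l * g i) ^+ 2 / g i by field.
  by rewrite divr_ge0 ?sqr_ge0.
have : \sum_i (2 * l * u i - l ^+ 2 * g i) <= \sum_i u i ^+ 2 / g i.
  by apply: ler_sum => i _; exact: term.
rewrite sumrB -!mulr_sumr -/U -/C.
have -> : 2 * l * U - l ^+ 2 * C = U ^+ 2 / C by rewrite /l; field; rewrite gt_eqF.
by rewrite ler_pdivrMr.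
Qed.

Lemma sum_decrease_le_gap (T : Type) (f : T -> R) (x : nat -> T) k :
  (exists lb, forall y, lb <= f y) ->
  \sum_(j < k) (f (x j) - f (x j.+1)) <= f (x 0%N) - inf (range f).
Proof.
move=> [lb f_lb].
have -> : \sum_(j < k) (f (x j) - f (x j.+1)) = f (x 0%N) - f (x k).
  elim: k => [|k IH]; first by rewrite big_ord0 subrr.
  by rewrite big_ord_recr /= IH addrA subrK.
have : inf (range f) <= f (x k).
  by apply: ge_inf; [exists lb => _ [y _ <-] | exists (x k)].
lra.
Qed.

Lemma mean_inv_gt0 (q : nat) (w : 'I_q -> R) : (0 < q)%N ->
  (forall i, 0 < w i) -> 0 < q%:R^-1 * \sum_i (w i)^-1.
Proof.
move=> q_gt0 w_gt0; rewrite mulr_gt0 ?invr_gt0 ?ltr0n // (bigD1 (Ordinal q_gt0)) //=.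
by rewrite ltr_wpDr ?invr_gt0 // sumr_ge0 // => i _; rewrite invr_ge0 ltW.
Qed.

End RealInequalities.

Section GluonRate.
Variables (R : realType) (p : nat) (m n : 'I_p -> nat).
Variables (N : forall i : 'I_p, 'M[R]_(m i, n i) -> R)
  (f : pspace R m n -> R) (G : pspace R m n -> pspace R m n)
  (L0 L1 : 'I_p -> R) (X : nat -> pspace R m n).
Arguments N : clear implicits.
Hypotheses (Nn : forall i : 'I_p, is_norm (N i)) (fG : is_gradient f G)
  (L0_ge0 : forall i, 0 <= L0 i) (L1_ge0 : forall i, 0 <= L1 i)
  (smooth : layerwise_L0L1_smooth N G L0 L1)
  (radius_pos : forall k i, G (X k) i != 0 ->
     0 < L0 i + L1 i * dual_norm (N i) (G (X k) i))
  (gluon : gluon_iterates N G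
     (fun k i => gluon_radius (N i) (L0 i) (L1 i) (G (X k) i)) X)
  (f_lb : exists lb, forall Y, lb <= f Y).

Local Notation d k i := (dual_norm (N i) (G (X k) i)).
Local Notation c k i := (L0 i + L1 i * d k i).
Local Notation Delta0 := (f (X 0%N) - inf (range f)).

Let d_ge0 k i : 0 <= d k i.
Proof. exact: dual_norm_ge0. Qed.

Let c_ge0 k i : 0 <= c k i.
Proof. by rewrite addr_ge0 // mulr_ge0 // d_ge0. Qed.

Let dual_norm_eq0_of_c_eq0 k i : c k i = 0 -> d k i = 0.
Proof.
move=> c0; have [->|gn0] := eqVneq (G (X k) i) 0; first exact: dual_norm0.
by have := radius_pos gn0; rewrite c0 ltxx.
Qed.

Lemma gluon_decrease k :
  \sum_i d k i ^+ 2 / c k i <= 2 * (f (X k) - f (X k.+1)).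
Proof.
have := descent_lemma Nn fG smooth (X k) (X k.+1).
have : sip (G (X k)) (ssub (X k.+1) (X k)) +
    \sum_i c k i / 2 * N i (X k.+1 i - X k i) ^+ 2
    <= - ((\sum_i d k i ^+ 2 / c k i) / 2).
  rewrite /sip -big_split mulr_suml -sumrN; apply: ler_sum => i _ /=.
  have [yx ymin] := gluon k i.
  apply: le_trans (gluon_block_decrease (Nn i) (L0_ge0 i) (L1_ge0 i) yx ymin) _.
  by rewrite invfM mulrA mulrAC.
lra.
Qed.

Lemma gluon_sum_dual_norm_bound k :
  (\sum_i d k i) ^+ 2 <= 2 * (f (X k) - f (X k.+1)) *
    (\sum_i L0 i + \big[Num.max/0]_i L1 i * \sum_i d k i).
Proof.
apply: le_trans (cauchy_schwarz_engel (c_ge0 k) (@dual_norm_eq0_of_c_eq0 k)) _.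
apply: (ler_pM _ _ (gluon_decrease k)).
- by apply: sumr_ge0 => i _; rewrite divr_ge0 ?sqr_ge0 ?c_ge0.
- by apply: sumr_ge0 => i _; exact: c_ge0.
rewrite big_split /= lerD2l mulr_sumr; apply: ler_sum => i _.
by rewrite ler_wpM2r ?d_ge0 // le_bigmax.
Qed.

Lemma gluon_weighted_sum_dual_norm_bound k : (forall i, 0 < L1 i) ->
  (\sum_i d k i / L1 i) ^+ 2 <= 2 * (f (X k) - f (X k.+1)) *
    (\sum_i L0 i / L1 i ^+ 2 + \sum_i d k i / L1 i).
Proof.
move=> L1_gt0; have L1_neq0 i : L1 i != 0 by rewrite gt_eqF.
have g_ge0 i : 0 <= c k i / L1 i ^+ 2 by rewrite divr_ge0 ?sqr_ge0 ?c_ge0.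
have gu i : c k i / L1 i ^+ 2 = 0 -> d k i / L1 i = 0.
  move/eqP; rewrite mulf_eq0 invr_eq0 expf_eq0 (negbTE (L1_neq0 i)) andbF orbF.
  by move/eqP/dual_norm_eq0_of_c_eq0 ->; rewrite mul0r.
have := cauchy_schwarz_engel g_ge0 gu.
have -> : \sum_i (d k i / L1 i) ^+ 2 / (c k i / L1 i ^+ 2) = \sum_i d k i ^+ 2 / c k i.
  apply: eq_bigr => i _; rewrite expr_div_n invf_div mulrA divfK //.
  exact: expf_neq0.
have -> : \sum_i c k i / L1 i ^+ 2 = \sum_i L0 i / L1 i ^+ 2 + \sum_i d k i / L1 i.
  by rewrite -big_split; apply: eq_bigr => i _ /=; field.
move/le_trans; apply; apply: ler_wpM2r (gluon_decrease k).
by apply: addr_ge0; apply: sumr_ge0 => i _; rewrite divr_ge0 ?L0_ge0 ?d_ge0 ?sqr_ge0.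
Qed.

Lemma gluon_iteration_complexity eps : 0 < eps ->
  let K := Num.ceil (2 * Delta0 * (\sum_i L0 i) / eps ^+ 2
                     + 2 * Delta0 * \big[Num.max/0]_i L1 i / eps) in
  (1 <= K)%R -> exists2 k : nat, (k%:Z < K)%R & \sum_i d k i <= eps.
Proof.
move=> eps_gt0 K.
apply: (exists_le_before_ceil (T := fun k => f (X k) - f (X k.+1)) eps_gt0).
- exact: sumr_ge0.
- exact: bigmax_ge_id.
- exact: gluon_sum_dual_norm_bound.
- by move=> k; exact: sum_decrease_le_gap.
Qed.

Lemma gluon_weighted_iteration_complexity eps : 0 < eps -> (forall i, 0 < L1 i) ->
  let H := (p%:R)^-1 * \sum_j (L1 j)^-1 in
  let K := Num.ceil (2 * Delta0 * (\sum_i L0 i / L1 i ^+ 2) / (eps ^+ 2 * H ^+ 2)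
                     + 2 * Delta0 / (eps * H)) in
  (1 <= K)%R -> exists2 k : nat, (k%:Z < K)%R & \sum_i (L1 i)^-1 / H * d k i <= eps.
Proof.
move=> eps_gt0 L1_gt0 H K K_ge1.
have [p0|p_gt0] := posnP p.
  exists 0%N; first exact: lt_le_trans K_ge1.
  by rewrite big1 ?ltW // => i; move: (ltn_ord i); rewrite {2}p0.
have H_gt0 : 0 < H := mean_inv_gt0 p_gt0 L1_gt0.
set A := \sum_i L0 i / L1 i ^+ 2.
have A_ge0 : 0 <= A by apply: sumr_ge0 => i _; rewrite divr_ge0 ?sqr_ge0.
have K_eq : K = Num.ceil (2 * Delta0 * A / (eps * H) ^+ 2 + 2 * Delta0 * 1 / (eps * H)).
  by rewrite mulr1 exprMn.
have bound k : (\sum_i d k i / L1 i) ^+ 2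
    <= 2 * (f (X k) - f (X k.+1)) * (A + 1 * \sum_i d k i / L1 i).
  by rewrite mul1r; exact: gluon_weighted_sum_dual_norm_bound.
rewrite K_eq in K_ge1 *.
have [k kK dk] := exists_le_before_ceil (mulr_gt0 eps_gt0 H_gt0) A_ge0 ler01
  bound (fun k => sum_decrease_le_gap X k f_lb) K_ge1.
exists k => //.
have -> : \sum_i (L1 i)^-1 / H * d k i = (\sum_i d k i / L1 i) / H.
  by rewrite mulr_suml; apply: eq_bigr => i _; rewrite mulrAC [_^-1 * _]mulrC.
by rewrite ler_pdivrMr.
Qed.

End GluonRate.

Theorem theorem3 (R : realType) (p : nat) (m n : 'I_p -> nat)
  (N : forall i : 'I_p, 'M[R]_(m i, n i) -> R)
  (f : pspace R m n -> R) (G : pspace R m n -> pspace R m n)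
  (L0 L1 : 'I_p -> R) (eps : R) (X : nat -> pspace R m n) :
  (forall i, is_norm (N i)) ->
  C1_with_gradient f G ->
  (exists lb : R, forall Y, lb <= f Y) ->
  (forall i, 0 <= L0 i) -> (forall i, 0 <= L1 i) ->
  layerwise_L0L1_smooth N G L0 L1 ->
  0 < eps ->
  (forall k i, G (X k) i != 0 ->
     0 < L0 i + L1 i * dual_norm (N i) (G (X k) i)) ->
  gluon_iterates N G
    (fun k i => gluon_radius (N i) (L0 i) (L1 i) (G (X k) i)) X ->
  let finf := inf (range f) in
  let Delta0 := f (X 0%N) - finf in
  let L1max := \big[Num.max/0]_(i < p) L1 i in
  (* part (1) *)
  (let K := Num.ceil (2 * Delta0 * (\sum_(i < p) L0 i) / eps ^+ 2
                      + 2 * Delta0 * L1max / eps) in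
   (1 <= K)%R ->
   exists2 k : nat, (k%:Z < K)%R &
     \sum_(i < p) dual_norm (N i) (G (X k) i) <= eps)
  /\
  (* part (2) *)
  ((forall i, 0 < L1 i) ->
   let H := (p%:R)^-1 * \sum_(j < p) (L1 j)^-1 in
   let K := Num.ceil (2 * Delta0 * (\sum_(i < p) L0 i / (L1 i) ^+ 2)
                        / (eps ^+ 2 * H ^+ 2)
                      + 2 * Delta0 / (eps * H)) in
   (1 <= K)%R ->
   exists2 k : nat, (k%:Z < K)%R &
     \sum_(i < p) ((L1 i)^-1 / H) * dual_norm (N i) (G (X k) i) <= eps).
Proof.
move=> Nn [fG _] f_lb L0_ge0 L1_ge0 smooth eps_gt0 radius_pos gluon.
split; first exact: (gluon_iteration_complexity Nn fG L0_ge0 L1_ge0 smooth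
  radius_pos gluon f_lb eps_gt0).
move=> L1_gt0; exact: (gluon_weighted_iteration_complexity Nn fG L0_ge0 L1_ge0
  smooth radius_pos gluon f_lb eps_gt0 L1_gt0).
Qed.
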